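(* Let $\gamma\in(0,1)$ and $\mu\in(0,\infty)\setminus\{1\}$. Let $g_0:\mathbb{R}\to\mathbb{R}\cup\{-\infty\}$ satisfy $\sup g_0=\gamma$, and let $(p_n,s_n,g_n)_{n\ge1}$ be defined by the dynamics in the context. Then for all $n\ge1$: - $s_n=\sup\{\xi\in\mathbb{R}:\sup_{x\in\mathbb{R}}\Phi_\xi[g_{n-1}](x)\ge\gamma\}$; - $g_n=\pi\circ\Phi_{s_n}[g_{n-1}]$.
   Context: Let $\pi(x)=x$ if $x\ge0$ and $\pi(x)=-\infty$ otherwise (including $x=-\infty$). Write $x_+=\max(x,0)$ and use $\sup\emptyset=-\infty$. Define $\Phi_\xi[h](x)=1-\gamma-\mu(\xi-x)_++\sup_y(h(y)-|x-y|)$. The dynamics is defined for $n\ge1$ by: - $p_n(x)=\pi[1-\gamma+\sup_y(g_{n-1}(y)-\min(1,\mu)(x-y)_+)]$; - $s_n=\sup\{x:p_n(x)\ge\gamma\}$; - $g_n(x)=\pi[1-\gamma+\sup_y(g_{n-1}(y)-|x-y|-\mu(s_n-x)_+)]$. *)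

From HB Require Import structures.
From mathcomp Require Import all_boot all_order all_algebra.
From mathcomp Require Import all_classical all_reals.
From mathcomp Require Import ereal.
Set Implicit Arguments. Unset Strict Implicit. Unset Printing Implicit Defensive.
Import Order.TTheory GRing.Theory Num.Theory.
Local Open Scope classical_set_scope.
Local Open Scope ring_scope.
Local Open Scope ereal_scope.

Section Defs.
Variable R : realType.

Definition pi_trunc (x : \bar R) : \bar R := if 0 <= x then x else -oo.

Definition Phi (gamma mu : R) (xi : \bar R) (h : R -> \bar R) (x : R) : \bar R :=
  (1 - gamma)%:E - mu%:E * maxe (xi - x%:E) 0
  + ereal_sup [set h y - (`|x - y|)%:E | y in [set: R]].

Definition dynamics (gamma mu : R) (p : nat -> R -> \bar R) (s : nat -> \bar R)
    (g : nat -> R -> \bar R) : Prop :=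
  forall n : nat, (1 <= n)%N ->
    [/\ (forall x : R, p n x = pi_trunc ((1 - gamma)%:E +
           ereal_sup [set g n.-1 y - (Num.min 1 mu * Num.max (x - y) 0)%:E
                     | y in [set: R]])),
        s n = ereal_sup [set x%:E | x in [set x : R | gamma%:E <= p n x]] &
        (forall x : R, g n x = pi_trunc ((1 - gamma)%:E +
           ereal_sup [set g n.-1 y - (`|x - y|)%:E - mu%:E * maxe (s n - x%:E) 0
                     | y in [set: R]]))].

End Defs.

From HB Require Import structures.
From mathcomp Require Import all_boot all_order all_algebra.
From mathcomp Require Import all_classical all_reals.
From mathcomp Require Import ereal.
From mathcomp Require Import lra.
Set Implicit Arguments. Unset Strict Implicit.
Import Order.TTheory GRing.Theory Num.Theory.
Local Open Scope classical_set_scope.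
Local Open Scope ring_scope.
Local Open Scope ereal_scope.

(* For mu > 0 the cheapest way to reach a point x from y, paying |x - y| plus
   the penalty mu (xi - x)_+, costs min(1, mu) (xi - y)_+: either stay at y or
   move straight to xi.  Exchanging the suprema over x and y in
   sup_x Phi_xi[h](x) therefore yields 1 - gamma + sup_y (h y - min(1,mu) (xi - y)_+),
   the untruncated value of p_n(xi).  Since gamma > 0, the truncation pi does not
   change whether this value reaches gamma, so both suprema describing s_n run
   over the same set.  The formula for g_n only pulls the penalty
   mu (s_n - x)_+, which does not depend on y, out of the supremum. *)

Lemma pi_trunc_ge (R : realType) (a v : \bar R) :
  0 <= a -> (a <= pi_trunc v) = (a <= v).
Proof.
move=> a_ge0; rewrite /pi_trunc; case: ifPn => //; rewrite -ltNge => v_lt0.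
have -> : (a <= v) = false by apply/negbTE; rewrite -ltNge (lt_le_trans v_lt0).
by rewrite leeNy_eq; apply/negbTE; apply: contraTN a_ge0 => /eqP ->.
Qed.

Lemma ereal_sup_image_subr (R : realType) (T : Type) (A : set T)
    (f : T -> \bar R) (c : \bar R) :
  c \is a fin_num \/ c = +oo ->
  ereal_sup [set f y - c | y in A] = ereal_sup [set f y | y in A] - c.
Proof.
case=> [c_fin|->]; last first.
  rewrite addeNy; apply/eqP; rewrite eq_le leNye andbT.
  by apply: ge_ereal_sup => _ [y _ <-]; rewrite addeNy.
apply/eqP; rewrite eq_le; apply/andP; split.
  apply: ge_ereal_sup => _ [y Ay <-]; apply: leeB => //.
  by apply: ereal_sup_ubound; exists y.
rewrite leeBlDr //; apply: ge_ereal_sup => _ [y Ay <-].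
by rewrite -leeBlDr //; apply: ereal_sup_ubound; exists y.
Qed.

Lemma PhiE (R : realType) (gamma mu xi : R) (h : R -> \bar R) (x : R) :
  Phi gamma mu xi%:E h x = (1 - gamma)%:E - (mu * Num.max (xi - x) 0)%:E
     + ereal_sup [set h y - (`|x - y|)%:E | y in [set: R]].
Proof. by rewrite /Phi -EFinB -EFin_max -EFinM. Qed.

Lemma hinge_le_dist_add (R : realType) (xi x y : R) :
  (Num.max (xi - y) 0 <= `|x - y| + Num.max (xi - x) 0)%R.
Proof.
have hinge_ge : (xi - x <= Num.max (xi - x) 0)%R by rewrite le_max lexx.
have hinge_ge0 : (0 <= Num.max (xi - x) 0)%R by rewrite le_max lexx orbT.
have := ler_norm (x - y)%R; have := normr_ge0 (x - y)%R.
by rewrite ge_max => ? ?; apply/andP; split; lra.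
Qed.

Section PositivePenalty.
Variables (R : realType) (mu : R).
Hypothesis mu_gt0 : (0 < mu)%R.

Lemma min1_hinge_le_dist_add (xi x y : R) :
  (Num.min 1 mu * Num.max (xi - y) 0 <= `|x - y| + mu * Num.max (xi - x) 0)%R.
Proof.
have hinge_ge0 : (0 <= Num.max (xi - x) 0)%R by rewrite le_max lexx orbT.
case: (leP 1%R mu) => mu1; rewrite ?mul1r.
  apply: le_trans (hinge_le_dist_add xi x y) _.
  by rewrite lerD2l; apply: ler_peMl.
apply: (@le_trans _ _ (mu * (`|x - y| + Num.max (xi - x) 0))%R).
  by apply: ler_wpM2l; [exact: ltW | exact: hinge_le_dist_add].
by rewrite mulrDr lerD2r; apply: ler_piMl; [exact: normr_ge0 | exact: ltW].
Qed.

(* The minimizer is x = xi when mu >= 1 and xi > y, and x = y otherwise. *)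
Lemma min1_hinge_attained (xi y : R) :
  exists x : R,
    (`|x - y| + mu * Num.max (xi - x) 0 <= Num.min 1 mu * Num.max (xi - y) 0)%R.
Proof.
case: (leP (xi - y)%R 0%R) => hy.
  by exists y; rewrite subrr normr0 add0r (max_r hy) !mulr0.
case: (leP 1%R mu) => mu1.
  exists xi; rewrite subrr (max_r (lexx _)) mulr0 addr0 mul1r.
  by rewrite ger0_norm // ltW.
by exists y; rewrite subrr normr0 add0r (max_l (ltW hy)).
Qed.

Lemma ereal_sup_Phi (gamma xi : R) (h : R -> \bar R) :
  ereal_sup (range (Phi gamma mu xi%:E h)) = (1 - gamma)%:E +
    ereal_sup [set h y - (Num.min 1 mu * Num.max (xi - y) 0)%:E | y in [set: R]].
Proof.
apply/eqP; rewrite eq_le; apply/andP; split.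
  apply: ge_ereal_sup => _ [x _ <-]; rewrite PhiE -addeA; apply: leeD2l.
  rewrite addeC leeBlDr //; apply: ge_ereal_sup => _ [y _ <-].
  apply: (@le_trans _ _ (h y - (Num.min 1 mu * Num.max (xi - y) 0)%:E
            + (mu * Num.max (xi - x) 0)%:E)).
    have := min1_hinge_le_dist_add xi x y.
    by case: (h y) => [r| |] //= ?; rewrite -!EFinB -EFinD lee_fin; lra.
  by apply: leeD2r; apply: ereal_sup_ubound; exists y.
rewrite -leeBrDl //; apply: ge_ereal_sup => _ [y _ <-]; rewrite leeBrDl //.
have [x cost_x] := min1_hinge_attained xi y.
apply: (@le_trans _ _ (Phi gamma mu xi%:E h x)); last first.
  by apply: ereal_sup_ubound; exists x.
rewrite PhiE -addeA; apply: leeD2l.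
apply: (@le_trans _ _ (- (mu * Num.max (xi - x) 0)%:E + (h y - (`|x - y|)%:E))).
  by case: (h y) => [r| |] //=; rewrite -!EFinD lee_fin; lra.
by apply: leeD2l; apply: ereal_sup_ubound; exists y.
Qed.

Lemma hinge_penalty_fin_or_pinfty (t : \bar R) (x : R) :
  mu%:E * maxe (t - x%:E) 0 \is a fin_num \/ mu%:E * maxe (t - x%:E) 0 = +oo.
Proof.
case: t => [r| |] /=.
- by left; rewrite -EFinB -EFin_max -EFinM.
- by right; rewrite maxye mulry gtr0_sg // mul1e.
- by left; rewrite maxNye mule0.
Qed.

End PositivePenalty.

Theorem propositionS2p4 (R : realType) (gamma mu : R)
    (p : nat -> R -> \bar R) (s : nat -> \bar R) (g : nat -> R -> \bar R) :
  (0 < gamma < 1)%R -> (0 < mu)%R -> mu != 1%R ->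
  ereal_sup (range (g 0%N)) = gamma%:E ->
  dynamics gamma mu p s g ->
  forall n : nat, (1 <= n)%N ->
    s n = ereal_sup [set xi%:E | xi in
            [set xi : R | gamma%:E <= ereal_sup (range (Phi gamma mu xi%:E (g n.-1)))]]
    /\ (forall x : R, g n x = pi_trunc (Phi gamma mu (s n) (g n.-1) x)).
Proof.
move=> /andP[gamma_gt0 _] mu_gt0 _ _ dyn n n_ge1.
have [pE sE gE] := dyn n n_ge1.
have gamma_ge0 : 0 <= gamma%:E by rewrite lee_fin ltW.
split.
  rewrite sE; congr ereal_sup; congr image; apply/seteqP; split => xi /=;
    by rewrite pE (pi_trunc_ge _ gamma_ge0) (ereal_sup_Phi mu_gt0).
move=> x; rewrite gE /Phi.
rewrite (ereal_sup_image_subr _ _ (hinge_penalty_fin_or_pinfty mu_gt0 (s n) x)).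
by rewrite addeA addeAC.
Qed.
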